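(* Let $n>2k\geq 4$ be integers. Suppose that $\mathcal{F},\mathcal{G}\subset\binom{[n]}{k}$ are non-trivial and cross-intersecting. If $\min\{|\mathcal{F}(\hat{1})|,|\mathcal{G}(\hat{1})|\}>\binom{n-2}{k-2}$, then \[ |\mathcal{F}||\mathcal{G}|\leq\left(\binom{n-1}{k-1}-\binom{n-k-1}{k-1}+1\right)^2. \]
   Context: $[n]=\{1,\ldots,n\}$ and $\binom{[n]}{k}$ is the family of its $k$-subsets. Families $\mathcal{F},\mathcal{G}$ are cross-intersecting if $F\cap G\neq\emptyset$ for all $F\in\mathcal{F},G\in\mathcal{G}$; a family is non-trivial if the intersection of all its members is empty. $\mathcal{H}(\hat{1})=\{H\in\mathcal{H}\colon 1\in H\}$. *)

From mathcomp Require Import all_boot.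
Set Implicit Arguments. Unset Strict Implicit. Unset Printing Implicit Defensive.

(* Ground set [n] = {1,...,n} is modelled by 'I_n = {0,...,n-1}; the paper's
   element i corresponds to the ordinal i-1. *)

Definition k_uniform (n k : nat) (F : {set {set 'I_n}}) : Prop :=
  forall A, A \in F -> #|A| = k.

Definition cross_intersecting (n : nat) (F G : {set {set 'I_n}}) : Prop :=
  forall A B, A \in F -> B \in G -> A :&: B != set0.

Definition non_trivial (n : nat) (F : {set {set 'I_n}}) : Prop :=
  \bigcap_(A in F) A = set0.

(* H(\hat x) = { H in H : x in H } *)
Definition star (n : nat) (F : {set {set 'I_n}}) (x : 'I_n) : {set {set 'I_n}} :=
  [set A in F | x \in A].

From mathcomp Require Import all_boot zify.
Set Implicit Arguments. Unset Strict Implicit. Unset Printing Implicit Defensive.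

(* Write F(x) and F(x') for the members of F containing and avoiding x.
   The link {A - x : A in F(x)} and the (k-1)-shadow of the family D of
   complements in [n] - x of the sets of G(x') are disjoint families of
   (k-1)-subsets of an (n-1)-set, since a common member would give disjoint
   members of F and G.  Hence |F(x)| + |shadow D| <= C(n-1, k-1).  On the
   other hand, a shifting argument (with the Lovasz form of Kruskal-Katona)
   shows that a nonempty s-uniform family E on s+p+1 points whose p-shadow is
   smaller than C(s+p, p) has p-shadow at least |E| + C(s, p) - 1.  The
   assumption |F(x)| > C(n-2, k-2) puts the (n-k-1)-uniform family D in this
   regime, which yields |F(x)| + |G(x')| <= C(n-1,k-1) - C(n-k-1,k-1) + 1.
   Adding the same bound with F and G exchanged bounds |F| + |G|, and AM-GM
   bounds |F| |G|. *)

Section Shadow.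
Variable T : finType.
Implicit Types (F G D : {set {set T}}) (A B X : {set T}) (x j : T).

Definition uniform t F := forall A, A \in F -> #|A| = t.

Definition family_on X F := forall A, A \in F -> A \subset X.

Definition shadow u F : {set {set T}} :=
  [set B : {set T} | (#|B| == u) && [exists A in F, B \subset A]].

Definition link x F : {set {set T}} := [set A :\ x | A in [set A in F | x \in A]].

Definition deletion x F : {set {set T}} := [set A in F | x \notin A].

Definition shifted x F :=
  forall A j, A \in F -> x \notin A -> j \in A -> x |: (A :\ j) \in F.

Lemma shadowP u F B :
  reflect (#|B| = u /\ exists2 A, A \in F & B \subset A) (B \in shadow u F).
Proof.
rewrite inE; apply: (iffP andP) => [[/eqP-> /existsP[A /andP[AF BA]]]|[-> [A AF BA]]].
  by split=> //; exists A.
by split=> //; apply/existsP; exists A; rewrite AF.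
Qed.

Lemma mem_shadow u F A B : A \in F -> B \subset A -> #|B| = u -> B \in shadow u F.
Proof. by move=> AF BA Bu; apply/shadowP; split=> //; exists A. Qed.

Lemma shadow_uniform u F : uniform u (shadow u F).
Proof. by move=> B /shadowP[]. Qed.

Lemma shadow_shadow u v F : shadow u (shadow v F) \subset shadow u F.
Proof.
apply/subsetP => B /shadowP[Bu [C /shadowP[_ [A AF CA]] BC]].
by apply/shadowP; split=> //; exists A => //; apply: subset_trans CA.
Qed.

Lemma shadow_id t F : uniform t F -> shadow t F = F.
Proof.
move=> tF; apply/setP => B; apply/idP/idP => [/shadowP[Bt [A AF BA]]|BF].
  suff /eqP-> : B == A by [].
  by rewrite eqEcard BA (tF A AF) Bt leqnn.
by apply/shadowP; split; [apply: tF | exists B].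
Qed.

Lemma leq_bin_card_shadow u F A : A \in F -> 'C(#|A|, u) <= #|shadow u F|.
Proof.
move=> AF; rewrite -cards_draws; apply/subset_leq_card/subsetP => B.
by rewrite inE => /andP[BA /eqP Bu]; apply/shadowP; split=> //; exists A.
Qed.

Lemma card_shadow_gt0 u t F : uniform t F -> u <= t -> 0 < #|F| -> 0 < #|shadow u F|.
Proof.
move=> tF ut; rewrite card_gt0 => /set0Pn[A AF].
by apply: leq_trans (leq_bin_card_shadow u AF); rewrite tF // bin_gt0.
Qed.

Lemma card_shadow0 F : 0 < #|F| -> #|shadow 0 F| = 1.
Proof.
rewrite card_gt0 => /set0Pn[A AF].
suff -> : shadow 0 F = [set set0] by rewrite cards1.
apply/setP => B; rewrite in_set1; apply/shadowP/eqP => [[/cards0_eq //]|->].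
by split; [rewrite cards0 | exists A; rewrite ?sub0set].
Qed.

Lemma card_link x F : #|link x F| = #|[set A in F | x \in A]|.
Proof.
apply: card_in_imset => A1 A2; rewrite !inE => /andP[_ xA1] /andP[_ xA2] eqA.
by rewrite -(setD1K xA1) -(setD1K xA2) eqA.
Qed.

Lemma card_link_deletion x F : #|F| = #|link x F| + #|deletion x F|.
Proof.
rewrite card_link -(cardsID [set A : {set T} | x \in A] F).
by congr (_ + _); apply: eq_card => A; rewrite !inE andbC.
Qed.

Lemma link_uniform t x F : uniform t F -> uniform t.-1 (link x F).
Proof.
move=> tF B /imsetP[A]; rewrite inE => /andP[AF xA] ->.
by rewrite -(tF A AF) (cardsD1 x A) xA.
Qed.

Lemma deletion_uniform t x F : uniform t F -> uniform t (deletion x F).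
Proof. by move=> tF A; rewrite inE => /andP[AF _]; apply: tF. Qed.

Lemma link_on X x F : family_on X F -> family_on (X :\ x) (link x F).
Proof. by move=> XF B /imsetP[A]; rewrite inE => /andP[AF _] ->; apply/setSD/XF. Qed.

Lemma deletion_on X x F : family_on X F -> family_on (X :\ x) (deletion x F).
Proof. by move=> XF A; rewrite inE => /andP[AF xA]; rewrite subsetD1 xA XF. Qed.

Lemma notin_link x F A : A \in link x F -> x \notin A.
Proof. by case/imsetP=> A0 _ ->; rewrite !inE eqxx. Qed.

(* The sets x + B with B in the u-shadow of the link and the (u+1)-shadow of
   the link, which avoids x, are disjoint parts of the (u+1)-shadow of F. *)
Lemma leq_card_shadows_link u x F :
  #|shadow u (link x F)| + #|shadow u.+1 (link x F)| <= #|shadow u.+1 F|.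
Proof.
set S := [set x |: B | B in shadow u (link x F)].
have notin_shadow v B : B \in shadow v (link x F) -> x \notin B.
  by case/shadowP=> _ [A /notin_link xA BA]; apply: contra xA; apply: subsetP.
have -> : #|shadow u (link x F)| = #|S|.
  apply/esym/card_in_imset => B1 B2 /notin_shadow xB1 /notin_shadow xB2 eqB.
  by rewrite -(setU1K xB1) -(setU1K xB2) eqB.
rewrite -cardsUI; have -> : S :&: shadow u.+1 (link x F) = set0.
  apply/setP => B; rewrite inE in_set0.
  by apply/negbTE/andP => -[/imsetP[C _ ->] /(notin_shadow u.+1)]; rewrite setU11.
rewrite cards0 addn0; apply/subset_leq_card/subsetP => B.
case/setUP => [/imsetP[C /shadowP[Cu [D /imsetP[A]]]]|/shadowP[Bu [D /imsetP[A]]]];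
  rewrite inE => /andP[AF xA] -> CA; [move=> -> | ]; apply/shadowP.
  have xC : x \notin C by apply/negP => /(subsetP CA); rewrite !inE eqxx.
  split; first by rewrite cardsU1 xC Cu.
  by exists A; rewrite // subUset sub1set xA (subset_trans CA) ?subsetDl.
by split=> //; exists A; rewrite // (subset_trans CA) ?subsetDl.
Qed.

Lemma shadow_deletion_sub_link w t x F : shifted x F -> uniform t F -> w < t ->
  shadow w (deletion x F) \subset shadow w (link x F).
Proof.
move=> sF tF wt; apply/subsetP => B /shadowP[Bw [A]].
rewrite inE => /andP[AF xA] BA.
have /subsetPn[j jA jB] : ~~ (A \subset B).
  by apply: contraL wt => /subset_leq_card; rewrite (tF A AF) Bw -leqNgt.
apply/shadowP; split=> //; exists (A :\ j); last by rewrite subsetD1 BA.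
have -> : A :\ j = (x |: (A :\ j)) :\ x by rewrite setU1K // !inE negb_and xA orbT.
by apply: imset_f; rewrite inE sF // setU11.
Qed.

Lemma card_link_gt0 t x F : shifted x F -> uniform t F -> 0 < t -> 0 < #|F| ->
  0 < #|link x F|.
Proof.
move=> sF tF t0; rewrite !card_gt0 => /set0Pn[A AF]; apply/set0Pn.
have [xA|xA] := boolP (x \in A); first by exists (A :\ x); apply: imset_f; rewrite inE AF.
have /set0Pn[j jA] : A != set0 by rewrite -card_gt0 tF.
exists ((x |: (A :\ j)) :\ x); apply: imset_f.
by rewrite inE setU11 andbT sF.
Qed.

Lemma card_swap a b A : a \in A -> b \notin A -> #|b |: (A :\ a)| = #|A|.
Proof. by move=> aA bA; rewrite cardsU1 (cardsD1 a A) aA !inE negb_and bA orbT. Qed.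

Lemma swapK a b A : a \in A -> b \notin A -> a |: ((b |: (A :\ a)) :\ b) = A.
Proof. by move=> aA bA; rewrite setU1K ?setD1K // !inE negb_and bA orbT. Qed.

Section Shift.
Variables x j : T.
Hypothesis neq_xj : x != j.

Definition shift1 A := if (j \in A) && (x \notin A) then x |: (A :\ j) else A.

Definition shift F : {set {set T}} :=
  [set (if shift1 A \in F then A else shift1 A) | A in F].

Lemma shift1_moved A : j \in A -> x \notin A -> shift1 A = x |: (A :\ j).
Proof. by move=> jA xA; rewrite /shift1 jA xA. Qed.

Lemma shift1_fixed A : ~~ ((j \in A) && (x \notin A)) -> shift1 A = A.
Proof. by rewrite /shift1 => /negbTE->. Qed.

Lemma card_shift F : #|shift F| = #|F|.
Proof.
have moved A : A \in F -> shift1 A \notin F -> (j \in A) && (x \notin A).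
  by move=> AF; apply: contraR => /shift1_fixed->.
apply: card_in_imset => A1 A2 A1F A2F.
case: ifPn => [s1F|n1]; case: ifPn => [s2F|n2] // eqA.
- by rewrite -eqA A1F in n2.
- by rewrite eqA A2F in n1.
case/andP: (moved _ A1F n1) (moved _ A2F n2) eqA => jA1 xA1 /andP[jA2 xA2].
by rewrite !shift1_moved // => eqA; rewrite -(swapK jA1 xA1) eqA swapK.
Qed.

Lemma shift_uniform t F : uniform t F -> uniform t (shift F).
Proof.
move=> tF _ /imsetP[A AF ->]; case: ifP => _; first exact: tF.
have [/andP[jA xA]|fixA] := boolP ((j \in A) && (x \notin A)).
  by rewrite shift1_moved // card_swap // tF.
by rewrite shift1_fixed // tF.
Qed.

Lemma shift_on X F : x \in X -> family_on X F -> family_on X (shift F).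
Proof.
move=> xX XF _ /imsetP[A AF ->]; case: ifP => _; first exact: XF.
have [/andP[jA xA]|fixA] := boolP ((j \in A) && (x \notin A)).
  by rewrite shift1_moved // subUset sub1set xX (subset_trans (subsetDl _ _) (XF A AF)).
by rewrite shift1_fixed // XF.
Qed.

Lemma mem_shift_to F B : x \in B -> j \notin B ->
  (B \in shift F) = (B \in F) || (j |: (B :\ x) \in F).
Proof.
move=> xB jB; apply/imsetP/idP => [[A AF ->]|].
  have [/andP[jA xA]|fixA] := boolP ((j \in A) && (x \notin A)); last first.
    by rewrite shift1_fixed //; case: ifP; rewrite AF.
  rewrite shift1_moved //; case: ifP => _; first by rewrite AF.
  by rewrite swapK // AF orbT.
have [BF _|BnF /= B'F] := boolP (B \in F).
  by exists B => //; rewrite shift1_fixed ?(negbTE jB) // BF.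
have jB' : j \in j |: (B :\ x) by rewrite setU11.
have xB' : x \notin j |: (B :\ x) by rewrite !inE negb_or neq_xj eqxx.
by exists (j |: (B :\ x)); rewrite // shift1_moved // swapK // (negbTE BnF).
Qed.

Lemma mem_shift_from F B : j \in B -> x \notin B ->
  (B \in shift F) = (B \in F) && (x |: (B :\ j) \in F).
Proof.
move=> jB xB; apply/imsetP/andP => [[A AF]|[BF B'F]]; last first.
  by exists B; rewrite // shift1_moved // B'F.
have [/andP[jA xA]|fixA] := boolP ((j \in A) && (x \notin A)); last first.
  by rewrite shift1_fixed //; case: ifP => _ eqB; move: fixA; rewrite -eqB jB xB.
rewrite shift1_moved //; case: ifP => [A'F ->|_ eqB] //.
by move: xB; rewrite eqB setU11.
Qed.

Lemma mem_shift_fixed F B : (x \in B) = (j \in B) -> (B \in shift F) = (B \in F).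
Proof.
move=> xjB; apply/imsetP/idP => [[A AF]|BF]; last first.
  by exists B; rewrite // shift1_fixed -?xjB ?andbN //; case: ifP.
have [/andP[jA xA]|fixA] := boolP ((j \in A) && (x \notin A)); last first.
  by rewrite shift1_fixed //; case: ifP => _ ->.
rewrite shift1_moved //; case: ifP => [_ -> //|_ eqB].
by move: xjB; rewrite eqB !inE !eqxx [j == x]eq_sym (negbTE neq_xj).
Qed.

Lemma shadow_shift_to u F B : x \in B -> j \notin B ->
  B \in shadow u (shift F) -> B \in shift (shadow u F).
Proof.
move=> xB jB /shadowP[Bu [A AS BA]]; rewrite mem_shift_to //.
have xA : x \in A := subsetP BA x xB.
have [jA|jA] := boolP (j \in A).
  by move: AS; rewrite mem_shift_fixed ?xA ?jA // => AF; rewrite (mem_shadow AF BA Bu).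
move: AS; rewrite mem_shift_to // => /orP[AF|A'F]; first by rewrite (mem_shadow AF BA Bu).
apply/orP; right; apply: (mem_shadow A'F); first by rewrite setUS // setSD.
by rewrite card_swap.
Qed.

Lemma shadow_shift_from u F B : j \in B -> x \notin B ->
  B \in shadow u (shift F) -> B \in shift (shadow u F).
Proof.
move=> jB xB /shadowP[Bu [A AS BA]]; rewrite mem_shift_from //.
have jA : j \in A := subsetP BA j jB.
have B'u : #|x |: (B :\ j)| = u by rewrite card_swap.
have [xA|xA] := boolP (x \in A).
  move: AS; rewrite mem_shift_fixed ?xA ?jA // => AF.
  rewrite (mem_shadow AF BA Bu) (mem_shadow AF _ B'u) //.
  by rewrite subUset sub1set xA (subset_trans (subsetDl _ _) BA).
move: AS; rewrite mem_shift_from // => /andP[AF A'F].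
by rewrite (mem_shadow AF BA Bu) (mem_shadow A'F _ B'u) // setUS // setSD.
Qed.

Lemma shadow_shift_fixed u F B : (x \in B) = (j \in B) ->
  B \in shadow u (shift F) -> B \in shift (shadow u F).
Proof.
move=> xjB /shadowP[Bu [A AS BA]]; rewrite mem_shift_fixed //.
have [/andP[xA jA]|n1] := boolP ((x \in A) && (j \notin A)).
  move: AS; rewrite mem_shift_to // => /orP[AF|A'F]; first exact: mem_shadow AF BA Bu.
  have xB : x \notin B by rewrite xjB; apply: contra jA; apply: subsetP.
  apply: (mem_shadow A'F _ Bu); apply/subsetP => y yB.
  have yx : y != x by apply: contraNneq xB => <-.
  by rewrite !inE yx (subsetP BA) ?orbT.
have [/andP[jA xA]|n2] := boolP ((j \in A) && (x \notin A)).
  by move: AS; rewrite mem_shift_from // => /andP[AF _]; apply: mem_shadow AF BA Bu.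
move: AS; rewrite mem_shift_fixed => [AF|]; first exact: mem_shadow AF BA Bu.
by move: n1 n2; case: (x \in A); case: (j \in A).
Qed.

Lemma card_shadow_shift u F : #|shadow u (shift F)| <= #|shadow u F|.
Proof.
rewrite -(card_shift (shadow u F)); apply/subset_leq_card/subsetP => B BS.
have [/andP[xB jB]|n1] := boolP ((x \in B) && (j \notin B)).
  exact: shadow_shift_to.
have [/andP[jB xB]|n2] := boolP ((j \in B) && (x \notin B)).
  exact: shadow_shift_from.
by apply: shadow_shift_fixed BS; move: n1 n2; case: (x \in B); case: (j \in B).
Qed.

Lemma deletion_shift_proper F A : A \in F -> j \in A -> x \notin A ->
  x |: (A :\ j) \notin F -> deletion x (shift F) \proper deletion x F.
Proof.
move=> AF jA xA A'F; rewrite properE; apply/andP; split.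
  apply/subsetP => B; rewrite !inE => /andP[BS xB]; rewrite xB andbT.
  have [jB|jB] := boolP (j \in B); first by move: BS; rewrite mem_shift_from // => /andP[].
  by move: BS; rewrite mem_shift_fixed // (negbTE xB) (negbTE jB).
apply/subsetPn; exists A; first by rewrite inE AF xA.
by rewrite inE mem_shift_from // (negbTE A'F) andbF.
Qed.

End Shift.

Lemma exists_shifted X x t F : x \in X -> family_on X F -> uniform t F ->
  exists F', [/\ #|F'| = #|F|, family_on X F', uniform t F', shifted x F'
             & forall u, #|shadow u F'| <= #|shadow u F|].
Proof.
move=> xX; have [m] := ubnP #|deletion x F|; elim: m F => // m IH F ltFm XF tF.
have [sF|] := boolP [forall A in F, forall j in A, (x \notin A) ==> (x |: (A :\ j) \in F)].
  exists F; split=> // A j AF xA jA.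
  by move/forall_inP/(_ A AF)/forall_inP/(_ j jA): sF; rewrite xA.
case/forall_inPn=> A AF /forall_inPn[j jA]; rewrite negb_imply => /andP[xA A'F].
have neq_xj : x != j by apply: contraNneq xA => ->.
have ltSm : #|deletion x (shift x j F)| < m.
  exact: leq_trans (proper_card (deletion_shift_proper neq_xj AF jA xA A'F)) ltFm.
have XS : family_on X (shift x j F) := shift_on xX XF.
have tS : uniform t (shift x j F) := shift_uniform tF.
have [F' [cF' XF' tF' sF' shF']] := IH _ ltSm XS tS.
exists F'; split=> //; first by rewrite cF' card_shift.
by move=> u; apply: leq_trans (shF' u) (card_shadow_shift neq_xj u F).
Qed.

Lemma Lovasz_shadow a k F : 0 < #|F| -> uniform k.+1 F ->
  'C(a, k.+1) <= #|F| -> 'C(a, k) <= #|shadow k F|.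
Proof.
elim: a k F => [|a IH] k F F0 tF leCF.
  by case: k tF leCF => [|k] tF _; rewrite ?bin0 ?bin0n ?(card_shadow_gt0 tF).
case: k tF leCF => [|k] tF leCF; first by rewrite bin0 (card_shadow_gt0 tF).
have /set0Pn[A AF] : F != set0 by rewrite -card_gt0.
have /set0Pn[x _] : A != set0 by rewrite -card_gt0 tF.
have [F' [cF' _ tF' sF' shF']] := exists_shifted (in_setT x) (fun A _ => subsetT A) tF.
have tQ : uniform k.+1 (link x F') := link_uniform tF'.
have tR : uniform k.+2 (deletion x F') := deletion_uniform tF'.
have RQ := subset_leq_card (shadow_deletion_sub_link sF' tF' (ltnSn k.+1)).
rewrite (shadow_id tQ) in RQ.
have QF' := leq_card_shadows_link k x F'; rewrite (shadow_id tQ) in QF'.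
have cF := card_link_deletion x F'; have shF := shF' k.+1.
have [leCQ|ltQC] := leqP 'C(a, k.+1) #|link x F'|.
  have Q0 : 0 < #|link x F'| by apply: card_link_gt0 sF' tF' _ _; rewrite ?cF'.
  by have := IH k _ Q0 tQ leCQ; rewrite binS; lia.
have ltCR : 'C(a, k.+2) < #|deletion x F'| by move: leCF; rewrite binS; lia.
by have := IH k.+1 _ (leq_ltn_trans (leq0n _) ltCR) tR (ltnW ltCR); lia.
Qed.

Lemma leq_bin_shadow_from_link m u x F : 0 < #|shadow u.+1 (link x F)| ->
  'C(m, u.+1) <= #|shadow u.+1 (link x F)| -> 'C(m.+1, u.+1) <= #|shadow u.+1 F|.
Proof.
move=> S0 leCS; have := Lovasz_shadow S0 (@shadow_uniform _ _) leCS.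
have := subset_leq_card (shadow_shadow u u.+1 (link x F)).
by have := leq_card_shadows_link u x F; rewrite binS; lia.
Qed.

Lemma leq_bin_sub m t u : u <= m -> u <= t -> 'C(m - u, t - u) <= 'C(m, t).
Proof.
elim: u m t => [|u IH] [|m] [|t] //= um ut; rewrite ?subn0 // !subSS.
by apply: leq_trans (IH _ _ um ut) _; rewrite binS leq_addl.
Qed.

Lemma card_small_shadow_le_trivial m t u F : uniform t F -> u <= t ->
  #|shadow u F| < 'C(m, u) -> #|F| = 0 \/ u = t -> #|F| + 'C(m - u, t - u) <= 'C(m, t).
Proof.
move=> tF ut ltSC [->|eq_ut]; last by move: ltSC; rewrite eq_ut (shadow_id tF) subnn bin0 addn1.
by rewrite leq_bin_sub // -bin_gt0 (leq_ltn_trans _ ltSC).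
Qed.

(* C(m, t) - C(m - u, t - u) counts the t-subsets of an m-set that meet a
   fixed u-subset. *)
Lemma card_small_shadow_le m t u X F : #|X| = m.+1 -> family_on X F -> uniform t F ->
  u <= t -> #|shadow u F| < 'C(m, u) -> #|F| + 'C(m - u, t - u) <= 'C(m, t).
Proof.
elim: m t u X F => [|m IH] t u X F cX XF tF ut ltSC;
  have [F0|F0] := posnP #|F|; try exact: card_small_shadow_le_trivial tF ut ltSC (or_introl F0).
  by case: u ut ltSC => [|u] _; rewrite ?card_shadow0 ?bin0n.
case: u ut ltSC => [|u] ut ltSC; first by move: ltSC; rewrite card_shadow0.
have [eq_ut|neq_ut] := eqVneq u.+1 t.
  exact: card_small_shadow_le_trivial tF ut ltSC (or_intror eq_ut).
have : u.+1 < t by rewrite ltn_neqAle neq_ut.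
case: t tF {ut neq_ut} => // t tF; rewrite ltnS => ltut.
have /set0Pn[x xX] : X != set0 by rewrite -card_gt0 cX.
have [F' [cF' XF' tF' sF' shF']] := exists_shifted xX XF tF.
have cX' : #|X :\ x| = m.+1 by move: cX; rewrite (cardsD1 x X) xX => -[].
have tQ : uniform t (link x F') := link_uniform tF'.
have tR : uniform t.+1 (deletion x F') := deletion_uniform tF'.
have Q0 : 0 < #|link x F'| by apply: card_link_gt0 sF' tF' _ _; rewrite ?cF'.
have [leCQ|ltQC] := leqP 'C(m, u.+1) #|shadow u.+1 (link x F')|.
  have := leq_bin_shadow_from_link (card_shadow_gt0 tQ ltut Q0) leCQ.
  by have := shF' u.+1; lia.
have IHQ := IH _ _ _ _ cX' (link_on (x := x) XF') tQ ltut ltQC.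
have RQ := subset_leq_card (shadow_deletion_sub_link sF' tF' (ltut : u.+1 < t.+1)).
have IHR := IH _ _ _ _ cX' (deletion_on (x := x) XF') tR (leqW ltut) (leq_ltn_trans RQ ltQC).
have um : u < m by rewrite -bin_gt0 (leq_ltn_trans _ ltQC).
rewrite -cF' (card_link_deletion x F') !subSS (binS m t).
move: IHR; rewrite subSS -[m - u](subnSK um) -[t - u](subnSK ltut) binS; lia.
Qed.

Section ShadowExcessStep.
Variable n : nat.
Hypothesis IH : forall s p X D, s + p = n -> #|X| = n.+1 -> family_on X D ->
  uniform s D -> p <= s -> 0 < #|D| -> #|shadow p D| < 'C(n, p) ->
  #|D| + 'C(s, p) <= #|shadow p D| + 1.

Lemma deletion_excess s p X x F : s + p.+1 = n -> #|X :\ x| = n.+1 ->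
    family_on X F -> uniform s.+1 F -> shifted x F -> p < s -> 0 < #|link x F| ->
    #|shadow p.+1 (link x F)| < 'C(n, p.+1) ->
  #|deletion x F| + 'C(s, p) <= #|shadow p (link x F)|.
Proof.
move=> En cX XF tF sF lt_ps Q0 ltQC.
have tQ : uniform s (link x F) := link_uniform tF.
have tR : uniform s.+1 (deletion x F) := deletion_uniform tF.
have RQ w : w < s.+1 -> #|shadow w (deletion x F)| <= #|shadow w (link x F)|.
  by move=> ltws; apply/subset_leq_card/(shadow_deletion_sub_link sF tF ltws).
have [R0|R0] := posnP #|deletion x F|.
  have /set0Pn[A AQ] : link x F != set0 by rewrite -card_gt0.
  by rewrite R0 -(tQ A AQ) leq_bin_card_shadow.
have [leCR|ltRC] := leqP 'C(n, p) #|shadow p (deletion x F)|.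
  have ltRC : #|shadow p.+1 (deletion x F)| < 'C(n, p.+1).
    exact: leq_ltn_trans (RQ p.+1 lt_ps) ltQC.
  have := card_small_shadow_le cX (deletion_on XF) tR (leqW lt_ps) ltRC.
  have -> : n - p.+1 = s by rewrite -En addnK.
  have -> : 'C(n, s.+1) = 'C(n, p) by rewrite -{1}(addnK p s.+1) addSnnS En bin_sub; lia.
  rewrite subSS bin_sub ?(ltnW lt_ps) //.
  by have := RQ p (ltnW lt_ps); lia.
case: p En lt_ps ltQC ltRC RQ => [|p] En lt_ps ltQC ltRC RQ.
  by move: ltRC; rewrite card_shadow0 ?bin0.
have En' : s.+1 + p.+1 = n by rewrite addSnnS.
have := IH En' cX (deletion_on XF) tR (leqW (ltnW lt_ps)) R0 ltRC.
have := RQ p.+1 (ltnW lt_ps); have : 0 < 'C(s, p) by rewrite bin_gt0 ltnW // ltnW.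
by rewrite binS; lia.
Qed.

Lemma card_shadow_excess_step s p X D : s + p = n.+1 -> #|X| = n.+2 ->
    family_on X D -> uniform s D -> p <= s -> 0 < #|D| ->
    #|shadow p D| < 'C(n.+1, p) ->
  #|D| + 'C(s, p) <= #|shadow p D| + 1.
Proof.
move=> En cX XD tD ps D0 ltSC.
case: p En ps ltSC => [|p] En ps ltSC; first by move: ltSC; rewrite card_shadow0.
have [eq_ps|neq_ps] := eqVneq p.+1 s; first by rewrite eq_ps (shadow_id tD) binn.
have : p.+1 < s by rewrite ltn_neqAle neq_ps.
case: s En tD {ps neq_ps} => // s; rewrite addSn => -[En] tD; rewrite ltnS => lt_ps.
have /set0Pn[x xX] : X != set0 by rewrite -card_gt0 cX.
have [D' [cD' XD' tD' sD' shD']] := exists_shifted xX XD tD.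
have cX' : #|X :\ x| = n.+1 by move: cX; rewrite (cardsD1 x X) xX => -[].
have tQ : uniform s (link x D') := link_uniform tD'.
have Q0 : 0 < #|link x D'| by apply: card_link_gt0 sD' tD' _ _; rewrite ?cD'.
have [leCQ|ltQC] := leqP 'C(n, p.+1) #|shadow p.+1 (link x D')|.
  have := leq_bin_shadow_from_link (card_shadow_gt0 tQ lt_ps Q0) leCQ.
  by have := shD' p.+1; lia.
have IHQ := IH En cX' (link_on (x := x) XD') tQ lt_ps Q0 ltQC.
have := deletion_excess En cX' XD' tD' sD' lt_ps Q0 ltQC.
have := leq_card_shadows_link p x D'; have := shD' p.+1.
by rewrite -cD' (card_link_deletion x D') binS; lia.
Qed.

End ShadowExcessStep.

Lemma card_shadow_excess s p X D : #|X| = (s + p).+1 -> family_on X D ->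
    uniform s D -> p <= s -> 0 < #|D| -> #|shadow p D| < 'C(s + p, p) ->
  #|D| + 'C(s, p) <= #|shadow p D| + 1.
Proof.
move En : (s + p) => n; elim: n s p X D En => [|n IH] s p X D.
  move=> /eqP; rewrite addn_eq0 => /andP[/eqP-> /eqP->] _ _ tD.
  by rewrite (shadow_id tD) binn.
exact: card_shadow_excess_step.
Qed.

Lemma disjoint_link_shadow u x F G : {in F & G, forall A B, A :&: B != set0} ->
  [disjoint link x F & shadow u [set ([set: T] :\ x) :\: B | B in deletion x G]].
Proof.
move=> cFG; apply/pred0P => C /=; apply/negbTE/andP => -[/imsetP[A]].
rewrite inE => /andP[AF xA] -> /shadowP[_ [E /imsetP[B]]].
rewrite inE => /andP[BG xB] -> AB.
have /set0Pn[y] := cFG A B AF BG; rewrite inE => /andP[yA yB].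
have yx : y != x by apply: contraNneq xB => <-.
by have := subsetP AB y; rewrite !inE yA yB yx => /(_ isT).
Qed.

Lemma card_deletion_gt0 x F : \bigcap_(A in F) A = set0 -> 0 < #|deletion x F|.
Proof.
move=> capF0; rewrite card_gt0; apply/set0Pn; apply/existsP; apply: contraT.
rewrite negb_exists => /forallP noF; have : x \in \bigcap_(A in F) A.
  by apply/bigcapP => A AF; move: (noF A); rewrite !inE AF negbK.
by rewrite capF0 inE.
Qed.

Lemma leq_card_star_deletion n k x F G : #|T| = n -> 2 * k < n -> 2 <= k ->
    uniform k F -> uniform k G -> {in F & G, forall A B, A :&: B != set0} ->
    0 < #|deletion x G| -> 'C(n - 2, k - 2) < #|[set A in F | x \in A]| ->
  #|[set A in F | x \in A]| + #|deletion x G| <= 'C(n - 1, k - 1) - 'C(n - k - 1, k - 1) + 1.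
Proof.
move=> cT ltkn k2 tF tG cFG G0 ltCF; rewrite -card_link in ltCF *.
set X := [set: T] :\ x; set D := [set X :\: B | B in deletion x G].
have cX : #|X| = n - 1.
  by move: (cardsD1 x [set: T]); rewrite in_setT cardsT cT => ->; rewrite subn1.
have subX B : B \in deletion x G -> B \subset X.
  by rewrite inE subsetD1 subsetT => /andP[].
have cD : #|D| = #|deletion x G|.
  have complK B : B \in deletion x G -> X :\: (X :\: B) = B.
    by move/subX/setIidPr => BX; rewrite setDDr setDv set0U.
  apply: card_in_imset => B1 B2 /complK e1 /complK e2 eqB.
  by rewrite -e1 eqB e2.
have tD : uniform (n - k - 1) D.
  move=> _ /imsetP[B BG ->]; rewrite cardsD (setIidPr (subX B BG)) cX.
  by move: BG; rewrite inE => /andP[/tG-> _]; lia.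
have XD : family_on X D by move=> _ /imsetP[B _ ->]; apply: subsetDl.
have tA : uniform (k - 1) (link x F) by rewrite subn1; apply: link_uniform.
have XA : family_on X (link x F) by apply: link_on => A _; apply: subsetT.
have le_bin : #|link x F| + #|shadow (k - 1) D| <= 'C(n - 1, k - 1).
  have := (leq_card_setU (link x F) (shadow (k - 1) D)).2.
  rewrite disjoint_link_shadow // => /eqP <-; rewrite -cX -cards_draws.
  apply/subset_leq_card/subsetP => B /setUP[BA|/shadowP[Bk [C CD BC]]]; rewrite inE.
    by rewrite XA // tA ?eqxx.
  by rewrite Bk eqxx (subset_trans BC) ?XD ?andbT.
have binS' : 'C(n - 1, k - 1) = 'C(n - 2, k - 1) + 'C(n - 2, k - 2).
  have -> : n - 1 = (n - 2).+1 by lia.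
  by have -> : k - 1 = (k - 2).+1 by lia.
have cX' : #|X| = (n - k - 1 + (k - 1)).+1 by rewrite cX; lia.
have ltSC : #|shadow (k - 1) D| < 'C(n - k - 1 + (k - 1), k - 1).
  have -> : n - k - 1 + (k - 1) = n - 2 by lia.
  lia.
have ps : k - 1 <= n - k - 1 by lia.
have D0 : 0 < #|D| by rewrite cD.
have := card_shadow_excess cX' XD tD ps D0 ltSC.
by rewrite cD; lia.
Qed.

End Shadow.

Lemma nat_AGM2_le m n h : m + n <= 2 * h -> m * n <= h ^ 2.
Proof.
move=> le_mn_h; have [AGM _] := nat_AGM2 m n.
have sq_le : (m + n) ^ 2 <= (2 * h) ^ 2 by rewrite leq_exp2r.
by have := leq_trans AGM sq_le; rewrite expnMn leq_pmul2l.
Qed.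

Theorem corollary2p4 (n k : nat) (Hk : 4 <= 2 * k) (Hn : 2 * k < n)
  (F G : {set {set 'I_n}}) (x1 : 'I_n) (Hx1 : nat_of_ord x1 = 0)
  (HF : k_uniform k F) (HG : k_uniform k G)
  (HFnt : non_trivial F) (HGnt : non_trivial G)
  (Hcross : cross_intersecting F G)
  (Hmin : 'C(n - 2, k - 2) < minn #|star F x1| #|star G x1|) :
  #|F| * #|G| <= ('C(n - 1, k - 1) - 'C(n - k - 1, k - 1) + 1) ^ 2.
Proof.
move: Hmin; rewrite leq_min => /andP[ltCF ltCG].
have k2 : 2 <= k by lia.
have crossFG : {in F & G, forall A B, A :&: B != set0} by move=> A AF B BG; apply: Hcross.
have crossGF : {in G & F, forall A B, A :&: B != set0}.
  by move=> A AG B BF; rewrite setIC; apply: Hcross.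
have boundF := leq_card_star_deletion (card_ord n) Hn k2 HF HG crossFG
  (card_deletion_gt0 x1 HGnt) ltCF.
have boundG := leq_card_star_deletion (card_ord n) Hn k2 HG HF crossGF
  (card_deletion_gt0 x1 HFnt) ltCG.
apply: nat_AGM2_le; rewrite (card_link_deletion x1 F) (card_link_deletion x1 G) !card_link.
rewrite /star in boundF boundG; lia.
Qed.
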